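(* Let $n\geq1$ and $m=2^{n+1}-1$. Let $e_1,e_3,\dots,e_{2^n-1}\in\mathrm K(n)^*(\mathrm{SO}_m)$ be the generators of $\mathrm K(n)^*(\mathrm{SO}_m)=\mathbb F_2[v_n^{\pm1}][e_1,e_3,\dots,e_{2^n-1}]/(e_{2i-1}^{2^{k_i}})$, $k_i=\lfloor\log_2\frac{2^{n+1}-2}{2i-1}\rfloor$, with co-multiplication as in Theorem 3.1, and let $\alpha_{2^n-1}\in\mathrm K(n)^*(\mathrm{SO}_m)^\vee$ be the element of the basis dual to the monomial basis $\{\prod_i e_{2i-1}^{t_i}:0\le t_i<2^{k_i}\}$ corresponding to $e_{2^n-1}$. Then the only idempotents of the algebra $\mathrm K(n)^*(\mathrm{SO}_m)^\vee$ other than $0$ and $1$ are $v_n^{-1}\alpha_{2^n-1}$ and $1-v_n^{-1}\alpha_{2^n-1}$.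
   Context: Base field of characteristic $0$, prime $2$. $\mathrm K(n)^*=\Omega^*\otimes_{\mathbb L}\mathbb F_2[v_n^{\pm1}]$ algebraic Morava K-theory; $\mathrm K(n)^*(\mathrm{SO}_m)$ is a Hopf algebra over $\mathbb F_2[v_n^{\pm1}]$, free of finite rank, with co-multiplication induced by the multiplication of the split group $\mathrm{SO}_m$; $\mathrm K(n)^*(\mathrm{SO}_m)^\vee=\mathrm{Hom}_{\mathbb F_2[v_n^{\pm1}]}(\mathrm K(n)^*(\mathrm{SO}_m),\mathbb F_2[v_n^{\pm1}])$ with multiplication dual to the co-multiplication. Theorem 3.1: $\widetilde\Delta(e_{2^n-1})=v_ne_{2^n-1}\otimes e_{2^n-1}$ and, with $\langle t\rangle=2^n-1-t$, $e_{2^dj}:=e_j^{2^d}$, $\widetilde\Delta(e_{\langle 2k\rangle})=\sum_{i=0}^{\nu_2(k)}v_n^{i+1}e_{\langle k/2^i\rangle}\otimes e_{\langle k/2^i\rangle}\prod_{j<i}(e_{\langle k/2^j\rangle}\otimes1+1\otimes e_{\langle k/2^j\rangle})$ for $1\le k\le2^{n-1}-1$. *)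

From HB Require Import structures.
From mathcomp Require Import all_boot all_order all_algebra.
From mathcomp Require Import fraction.
From mathcomp Require Import mpoly.
Set Implicit Arguments. Unset Strict Implicit. Unset Printing Implicit Defensive.
Import GRing.Theory.
Local Open Scope ring_scope.

(* Base field: the fraction field of F_2[v]; the coefficient ring
   F_2[v^{+-1}] is the subring of Laurent elements (see [laurent]). *)
Notation K := {fraction {poly 'F_2}}.
Notation tofracP := (@FracField.tofrac {poly 'F_2}).
Definition v : K := tofracP 'X.
Definition laurent (x : K) : Prop :=
  exists (k : nat) (p : {poly 'F_2}), x * v ^+ k = tofracP p.

(* Number of generators e_1, e_3, ..., e_{2^n-1} : 2^(n-1) (written so that
   the ordinal type is of the form 'I_(_.+1); equal to 2^(n-1) since it is >0).
   Generator number i (0 <= i < Ngen n) is e_{2i+1}. *)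
Definition Ngen (n : nat) : nat := ((2 ^ n.-1).-1.+1)%N.

Definition kexp (n i : nat) : nat := trunc_log 2 ((2 ^ n.+1 - 2) %/ (2 * i + 1))%N.

(* Exponent vectors t, encoding the monomial prod_i e_{2i+1}^{t_i}. *)
Definition expvec (n : nat) := {ffun 'I_(Ngen n) -> 'I_(2 ^ n)%N}.
Definition admissible (n : nat) (t : expvec n) : bool :=
  [forall i, ((t i : nat) < 2 ^ kexp n i)%N].
Definition basis (n : nat) := {t : expvec n | admissible t}.

Definition mnm_of (n : nat) (b : basis n) : 'X_{1..Ngen n} :=
  [multinom (val b i : nat) | i < Ngen n].

(* Polynomial model of A (x) A (before imposing the monomial relations):
   outer variables 'X_i = e_{2i+1} (x) 1, inner variables = 1 (x) e_{2i+1}. *)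
Definition Tens (n : nat) := {mpoly {mpoly K[Ngen n]}[Ngen n]}.

(* For s > 0 : e_s = e_{o}^{2^d} with s = 2^d o, o odd (convention
   e_{2^d j} := e_j^{2^d}); o = 2 * idx s + 1. *)
Definition idx (s : nat) : nat := ((s %/ 2 ^ logn 2 s)./2)%N.
Definition eL (n s : nat) : Tens n :=
  'X_(inord (idx s)) ^+ (2 ^ logn 2 s)%N.
Definition eR (n s : nat) : Tens n :=
  (('X_(inord (idx s)) : {mpoly K[Ngen n]}) ^+ (2 ^ logn 2 s)%N)%:MP.
Definition cst (n : nat) (c : K) : Tens n := (c%:MP)%:MP.

Definition brk (n t : nat) : nat := (2 ^ n - 1 - t)%N.

(* Reduced co-product of Theorem 3.1 on the generator e_j, j = 2i+1:
   - j = 2^n-1 : v e_j (x) e_j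
   - j = <2k>, 1 <= k <= 2^{n-1}-1 :
       sum_{l=0}^{nu_2(k)} v^{l+1} e_{<k/2^l>} (x) e_{<k/2^l>}
           prod_{l'<l} (e_{<k/2^l'>} (x) 1 + 1 (x) e_{<k/2^l'>}) *)
Definition redcoprod (n i : nat) : Tens n :=
  let j := (2 * i + 1)%N in
  if j == (2 ^ n - 1)%N then cst n v * eL n j * eR n j
  else
    let k := ((brk n j)./2)%N in
    \sum_(l < (logn 2 k).+1)
       cst n (v ^+ l.+1) * eL n (brk n (k %/ 2 ^ l)%N) * eR n (brk n (k %/ 2 ^ l)%N)
       * \prod_(l' < l) (eL n (brk n (k %/ 2 ^ l')%N) + eR n (brk n (k %/ 2 ^ l')%N)).

Definition coprod_gen (n i : nat) : Tens n :=
  eL n (2 * i + 1)%N + eR n (2 * i + 1)%N + redcoprod n i.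

(* Structure constants: Delta(e^t) = sum_{t1,t2} coprod_coef t t1 t2 e^t1 (x) e^t2.
   Delta is multiplicative; reduction modulo the monomial relations
   e_{2i+1}^{2^{k_i}} = 0 keeps exactly the coefficients of admissible monomials. *)
Definition coprod_coef (n : nat) (t t1 t2 : basis n) : K :=
  ((\prod_(i < Ngen n) coprod_gen n i ^+ (val t i : nat)) @_ (mnm_of t1)) @_ (mnm_of t2).

(* The dual K(n)^*(SO_m)^vee, identified (via the dual basis) with functions
   from the monomial basis to the coefficient ring; multiplication dual to Delta. *)
Notation dual n := {ffun basis n -> K}.
Definition dual_elt (n : nat) (f : dual n) : Prop := forall b, laurent (f b).
Definition dmul (n : nat) (f g : dual n) : dual n :=
  [ffun t => \sum_(t1 : basis n) \sum_(t2 : basis n) coprod_coef t t1 t2 * f t1 * g t2].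
(* unit of the dual algebra = counit of K(n)^*(SO_m): e^0 |-> 1, e^t |-> 0 else *)
Definition dunit (n : nat) : dual n :=
  [ffun t : basis n => if [forall i, (val t i : nat) == 0%N :> nat] then 1 else 0].
(* alpha_{2^n-1}: dual basis element of the monomial e_{2^n-1}
   (generator index 2^(n-1)-1, exponent 1, all other exponents 0). *)
Definition alpha_top (n : nat) : dual n :=
  [ffun t : basis n => if [forall i, (val t i : nat) == ((i : nat) == (2 ^ n.-1).-1)%N :> nat]
                       then 1 else 0].
Definition dual_idem (n : nat) (f : dual n) : Prop := dmul f f = f.
Definition vinv_alpha (n : nat) : dual n := [ffun t => v^-1 * alpha_top n t].

From Pilot Require Import Defs.
From HB Require Import structures.
From mathcomp Require Import all_boot all_order all_algebra.
From mathcomp Require Import fraction.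
From mathcomp Require Import mpoly.
From mathcomp Require Import zify.
Import GRing.Theory.
Local Open Scope ring_scope.

(* The dual algebra is commutative because the coproduct is invariant under
   the swap of the tensor factors, and in characteristic 2 the square of f in
   the dual basis is  (f * f)(t) = \sum_s c(t; s, s) f(s)^2 : the off-diagonal
   terms c(t; s, s') f(s) f(s') cancel in pairs.  The diagonal coefficients are
   read off through the multiplication map mu of the polynomial model, which
   also sees only the diagonal in characteristic 2.  By Theorem 3.1,
   mu (Delta e_{2i+1}) = v e_{2^{n-1}+i}^2, so c(t; s, s) = v^{|t|} when s is
   the exponent of prod_i e_{2^{n-1}+i}^{t_i} (the shift of t) and 0 otherwise.
   Shifting strictly raises the weighted degree \sum_i t_i (2i+1) except at 1
   and e_{2^n-1}, the only monomials that shift onto 1 and e_{2^n-1}; a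
   counterexample of maximal degree then shows that every idempotent is
   supported on these two monomials, where f * f = f reads a^2 = a, v b^2 = b. *)

Lemma sum_sym_pchar2 (R : nzRingType) (T : finType) (F : T -> T -> R) :
  2 \in [pchar R] -> (forall a b, F a b = F b a) ->
  \sum_a \sum_b F a b = \sum_a F a a.
Proof.
move=> R2 FC; pose lt (a b : T) := (enum_rank a < enum_rank b)%N.
have split_row a :
    \sum_b F a b = F a a + (\sum_(b | lt b a) F a b + \sum_(b | lt a b) F a b).
  rewrite (bigD1 a) //= (bigID (lt ^~ a)) /=; congr (_ + (_ + _)); apply: eq_bigl => b.
    by case: eqP => [->|]; rewrite /lt ?ltnn.
  rewrite /lt; case: ltngtP => [_|ab|/val_inj/enum_rank_inj ->]; rewrite ?andbF ?eqxx //.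
  by rewrite andbT; apply: contraTneq ab => ->; rewrite ltnn.
rewrite (eq_bigr _ (fun a _ => split_row a)) !big_split /=.
rewrite [X in _ + (_ + X)](exchange_big_dep xpredT) //=.
by rewrite (eq_bigr _ (fun a _ => eq_bigr _ (fun b _ => FC b a))) (addrr_pchar2 R2) addr0.
Qed.

Lemma sqrf_idem (R : idomainType) (x : R) : x ^+ 2 = x -> x = 0 \/ x = 1.
Proof.
move/eqP; rewrite -subr_eq0 expr2 -{3}(mulr1 x) -mulrBr mulf_eq0 subr_eq0.
by case/orP => /eqP; [left|right].
Qed.

Lemma rmorph_sumprod_vanish (R S : comNzRingType) (phi : {rmorphism R -> S}) m
    (a x y : nat -> R) :
  (forall l, phi (x l + y l) = 0) ->
  phi (\sum_(l < m.+1) a l * x l * y l * \prod_(l' < l) (x l' + y l')) =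
  phi (a 0%N * x 0%N * y 0%N).
Proof.
move=> phixy; rewrite rmorph_sum big_ord_recl big_ord0 mulr1 big1 ?addr0 // => l _.
by rewrite big_ord_recl !rmorphM phixy mul0r mulr0.
Qed.

Lemma odd_part s : (0 < s)%N -> s = (2 ^ logn 2 s * (2 * idx s + 1))%N.
Proof.
move=> s0; have [m coprime_m] := pfactor_coprime (isT : prime 2) s0.
rewrite /idx; set L := logn 2 s => def_s.
have odd_m : odd m by rewrite -coprimen2 coprime_sym.
have -> : (s %/ 2 ^ L = m)%N by rewrite def_s mulnK ?expn_gt0.
rewrite {1}def_s mulnC; congr (_ * _)%N.
by rewrite -{1}(odd_double_half m) odd_m -mul2n addnC.
Qed.

Definition wdeg {G : nat} (m : 'X_{1..G}) : nat := (\sum_(j < G) m j * (2 * j + 1))%N.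

Lemma wdeg_sum G (I : finType) (m : I -> 'X_{1..G}) (k : I -> nat) :
  wdeg (\sum_i m i *+ k i)%MM = (\sum_i wdeg (m i) * k i)%N.
Proof.
rewrite /wdeg (eq_bigr (fun j : 'I_G => \sum_i m i j * k i * (2 * j + 1)))%N => [|j _].
  rewrite exchange_big; apply: eq_bigr => i _; rewrite big_distrl.
  by apply: eq_bigr => j _; rewrite mulnAC.
by rewrite mnm_sumE big_distrl; apply: eq_bigr => i _; rewrite mulmnE.
Qed.

(** * The tensor square of a polynomial algebra *)

Section Tensor.
Context {R : comNzRingType} {G : nat}.
Local Notation A := {mpoly R[G]}.
Local Notation T := {mpoly A[G]}.

Definition tensor_inl : {rmorphism A -> T} := mmap (@mpolyC G A \o @mpolyC G R) (fun i => 'X_i).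
(* Plain functions with a copied rmorphism structure, so that rewrite rules
   about them are keyed on their own names. *)
Definition tensor_swap (p : T) : T := mmap tensor_inl (fun i => ('X_i : A)%:MP) p.
HB.instance Definition _ :=
  GRing.RMorphism.copy tensor_swap (mmap tensor_inl (fun i => ('X_i : A)%:MP)).

Definition tensor_mul (p : T) : A := mmap (idfun : {rmorphism A -> A}) (fun i => 'X_i) p.
HB.instance Definition _ :=
  GRing.RMorphism.copy tensor_mul (mmap (idfun : {rmorphism A -> A}) (fun i => 'X_i)).

Lemma tensor_swapCC (c : R) : tensor_swap c%:MP%:MP = c%:MP%:MP.
Proof. by rewrite /tensor_swap /= mmapC /tensor_inl /= mmapC. Qed.

Lemma tensor_swapXl (m : 'X_{1..G}) : tensor_swap 'X_[m] = ('X_[m] : A)%:MP.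
Proof.
rewrite /tensor_swap /= mmapX /mmap1 [in RHS]mpolyXE_id rmorph_prod.
by under eq_bigr do rewrite rmorphXn.
Qed.

Lemma tensor_swapXr (m : 'X_{1..G}) : tensor_swap ('X_[m] : A)%:MP = 'X_[m].
Proof. by rewrite /tensor_swap /= mmapC /tensor_inl /= mmapX /mmap1 -mpolyXE_id. Qed.

Lemma tensor_mulC (p : A) : tensor_mul p%:MP = p.
Proof. by rewrite /tensor_mul /= mmapC. Qed.

Lemma tensor_mulX (m : 'X_{1..G}) : tensor_mul 'X_[m] = 'X_[m].
Proof. by rewrite /tensor_mul /= mmapX /mmap1 -mpolyXE_id. Qed.

(* [c%:MP%:MP * 'X_[a] * ('X_[b])%:MP] is c X^a (x) X^b. *)
Lemma tensor_ind (P : T -> Prop) :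
  P 0 -> (forall p q, P p -> P q -> P (p + q)) ->
  (forall c a b, P (c%:MP%:MP * 'X_[a] * ('X_[b] : A)%:MP)) -> forall p, P p.
Proof.
move=> P0 PD Pterm; elim/mpolyind => // c a p _ _ Pp; apply: (PD) => //.
rewrite -mul_mpolyC; elim/mpolyind: c => [|d b q _ _ Pq]; first by rewrite rmorph0 mul0r.
rewrite rmorphD mulrDl; apply: (PD) => //.
by rewrite -mul_mpolyC rmorphM mulrAC; apply: Pterm.
Qed.

Lemma mcoeff_tensor_term (c : R) (a b a' b' : 'X_{1..G}) :
  (c%:MP%:MP * 'X_[a] * ('X_[b] : A)%:MP : T)@_a'@_b' =
  if (a == a') && (b == b') then c else 0.
Proof.
rewrite mulrAC -rmorphM mcoeffCM mcoeffX.
have [_|_] := eqVneq a a'; last by rewrite mulr0 mcoeff0.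
by rewrite mulr1 mcoeffCM mcoeffX; case: eqVneq; rewrite ?mulr1 ?mulr0.
Qed.

Lemma mcoeff_tensor_swap (p : T) a b : (tensor_swap p)@_a@_b = p@_b@_a.
Proof.
elim/tensor_ind: p => [|p q Hp Hq|c a' b'].
- by rewrite rmorph0 !mcoeff0.
- by rewrite rmorphD !mcoeffD; congr (_ + _).
rewrite !rmorphM /= tensor_swapCC tensor_swapXl tensor_swapXr mulrAC !mcoeff_tensor_term.
by rewrite andbC.
Qed.

Lemma sum_bmnm_pred1 (V : nmodType) k (m : 'X_{1..G}) (F : 'X_{1..G} -> V) :
  (mdeg m < k)%N -> \sum_(a : 'X_{1..G < k} | m == a) F a = F m.
Proof.
by move=> hm; rewrite (big_pred1 (BMultinom hm)) // => a; rewrite eq_sym -val_eqE.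
Qed.

Lemma mcoeff_tensor_mul (p : T) m :
  (tensor_mul p)@_m = \sum_(a : 'X_{1..G < (mdeg m).+1})
                        \sum_(b : 'X_{1..G < (mdeg m).+1} | m == (a + b)%MM) p@_a@_b.
Proof.
elim/tensor_ind: p => [|p q Hp Hq|c a b].
- by rewrite rmorph0 mcoeff0 big1 // => a _; rewrite big1 // => b _; rewrite !mcoeff0.
- rewrite rmorphD mcoeffD Hp Hq -big_split; apply: eq_bigr => a _.
  by rewrite -big_split; apply: eq_bigr => b _; rewrite !mcoeffD.
rewrite !rmorphM /= tensor_mulX !tensor_mulC -mulrA -mpolyXD mcoeffCM mcoeffX.
under eq_bigr do under eq_bigr do rewrite mcoeff_tensor_term.
have [<- | ne] := eqVneq (a + b)%MM m; last first.
  rewrite mulr0 big1 // => a' _; rewrite big1 // => b' /eqP mab.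
  have [ea|] //= := eqVneq a a'; have [eb|] //= := eqVneq b b'.
  by case/eqP: ne; rewrite mab ea eb.
have ha : (mdeg a < (mdeg (a + b)).+1)%N by rewrite ltnS mdegD leq_addr.
have hb : (mdeg b < (mdeg (a + b)).+1)%N by rewrite ltnS mdegD leq_addl.
rewrite (bigD1 (BMultinom ha)) //= [X in _ + X]big1 ?addr0 => [|a' ne]; last first.
  by rewrite big1 // => b' _; case: eqVneq => //= ea; case/eqP: ne; exact: val_inj.
rewrite (bigD1 (BMultinom hb)) //= !eqxx [X in _ + X]big1 ?addr0 ?mulr1 // => b' /andP[_ ne].
by rewrite andTb; case: eqVneq => //= eb; case/eqP: ne; exact: val_inj.
Qed.

Lemma eqm_double (a s : 'X_{1..G}) : ((s + s)%MM == (a + a)%MM) = (s == a).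
Proof.
apply/eqP/eqP => [/mnmP h|->//]; apply/mnmP => i.
by have := h i; rewrite !mnmDE !addnn => /double_inj.
Qed.

Lemma mcoeff_tensor_mul_diag (p : T) s :
  2 \in [pchar R] -> (forall a b, p@_a@_b = p@_b@_a) -> (tensor_mul p)@_(s + s) = p@_s@_s.
Proof.
move=> R2 psym; rewrite mcoeff_tensor_mul.
under eq_bigr do rewrite big_mkcond /=.
rewrite sum_sym_pchar2 //; last by move=> a b; rewrite addmC psym.
rewrite -big_mkcond /=.
under eq_bigl do rewrite eqm_double.
by rewrite (@sum_bmnm_pred1 _ _ s (fun a => p@_a@_a)) // ltnS mdegD leq_addr.
Qed.

End Tensor.

(** * The coproduct of K(n)^*(SO_m) *)

Lemma pchar2_K : 2 \in [pchar K].
Proof. by apply: (rmorph_pchar tofracP); apply: (rmorph_pchar (@polyC _)); apply: pchar_Fp. Qed.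

Lemma v_neq0 : v != 0.
Proof. by rewrite tofrac_eq0 polyX_eq0. Qed.

Lemma Ngen_eq n : Ngen n = (2 ^ n.-1)%N.
Proof. by rewrite /Ngen prednK // expn_gt0. Qed.

Section Coproduct.
Context {n : nat} (hn : (0 < n)%N).
Local Notation G := (Ngen n).
Local Notation B := (Defs.basis n).

Lemma expn_pred_double : (2 ^ n = 2 ^ n.-1 + 2 ^ n.-1)%N.
Proof. by case: n hn => // m _; rewrite expnS mul2n addnn. Qed.

Definition top : 'I_G := ord_max.

Lemma top_val : (top : nat) = (2 ^ n.-1).-1.
Proof. by []. Qed.

Lemma ltn_top (i : 'I_G) : i != top -> (i < top)%N.
Proof.
move=> ne; have := ltn_ord i; rewrite ltnS leq_eqVlt => /orP[/eqP e|//].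
by case/eqP: ne; apply: val_inj.
Qed.

Lemma idx_lt s : (0 < s)%N -> (s < 2 ^ n)%N -> (idx s < G)%N.
Proof.
move=> s0 sn; have := odd_part _ s0; have := expn_gt0 2 (logn 2 s).
rewrite Ngen_eq; move: sn; rewrite expn_pred_double; nia.
Qed.

Lemma top_gen_eq i : (2 * i + 1 = 2 ^ n - 1)%N -> (2 * i + 1 = 2 ^ n.-1 + i)%N.
Proof. by rewrite expn_pred_double; have := expn_gt0 2 n.-1; lia. Qed.

Lemma brk_half_brk i : (i < 2 ^ n.-1)%N -> (2 * i + 1 != 2 ^ n - 1)%N ->
  brk n ((brk n (2 * i + 1))./2) = (2 ^ n.-1 + i)%N.
Proof.
move=> hi /eqP hj; rewrite /brk.
have -> : (2 ^ n - 1 - (2 * i + 1) = (2 ^ n.-1 - 1 - i) * 2)%N.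
  by move: hj; rewrite expn_pred_double; lia.
by rewrite muln2 doubleK expn_pred_double; lia.
Qed.

Lemma kexp_top : kexp n top = 1%N.
Proof.
have h2 := expn_pred_double; have := expn_gt0 2 n.-1; rewrite /kexp top_val => p0.
have -> : (2 ^ n.+1 - 2 = 2 * (2 * (2 ^ n.-1).-1 + 1))%N by rewrite expnS; lia.
by rewrite mulnK; [exact: trunc_lognn | lia].
Qed.

Definition emono (s : nat) : 'X_{1..G} := (U_(inord (idx s)) *+ 2 ^ logn 2 s)%MM.

Lemma eL_emono s : eL n s = 'X_[emono s].
Proof. by rewrite /eL /emono mpolyXn. Qed.

Lemma eR_emono s : eR n s = ('X_[emono s])%:MP.
Proof. by rewrite /eR /emono mpolyXn. Qed.

Lemma tensor_swap_coprod_gen i : tensor_swap (coprod_gen n i) = coprod_gen n i.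
Proof.
have swapLR s : tensor_swap (eL n s + eR n s) = eL n s + eR n s.
  by rewrite rmorphD /= eL_emono eR_emono tensor_swapXl tensor_swapXr addrC.
have swapLRC c s :
    tensor_swap (cst n c * eL n s * eR n s) = cst n c * eL n s * eR n s.
  by rewrite !rmorphM /= /cst tensor_swapCC eL_emono eR_emono tensor_swapXl tensor_swapXr [LHS]mulrAC.
rewrite /coprod_gen rmorphD /= swapLR; congr (_ + _); rewrite /redcoprod; case: ifP => _ //.
rewrite rmorph_sum; apply: eq_bigr => l _; rewrite rmorphM rmorph_prod /= swapLRC.
by under eq_bigr do rewrite swapLR.
Qed.

Lemma mcoeff_coprodC (t : 'I_G -> nat) a b :
  (\prod_(i < G) coprod_gen n i ^+ t i : Tens n)@_a@_b =
  (\prod_(i < G) coprod_gen n i ^+ t i : Tens n)@_b@_a.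
Proof.
rewrite -[in LHS]mcoeff_tensor_swap rmorph_prod /=.
by under eq_bigr do rewrite rmorphXn /= tensor_swap_coprod_gen.
Qed.

Lemma tensor_mul_coprod_gen (i : 'I_G) :
  tensor_mul (coprod_gen n i) = v%:MP * 'X_[emono (2 ^ n.-1 + i)] ^+ 2.
Proof.
have A2 : 2 \in [pchar {mpoly K[G]}] := rmorph_pchar (@mpolyC _ _) pchar2_K.
have mulLR s : tensor_mul (eL n s + eR n s) = 0.
  by rewrite rmorphD /= eL_emono eR_emono tensor_mulX tensor_mulC addrr_pchar2.
have mulLRC c s : tensor_mul (cst n c * eL n s * eR n s) = c%:MP * 'X_[emono s] ^+ 2.
  by rewrite !rmorphM /= /cst tensor_mulC eL_emono eR_emono tensor_mulX tensor_mulC mulrA.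
rewrite /coprod_gen rmorphD /= mulLR add0r /redcoprod; case: ifP => [/eqP top|ntop].
  by rewrite mulLRC (top_gen_eq _ top).
have hi : (i < 2 ^ n.-1)%N by rewrite -Ngen_eq.
(* mu kills e (x) 1 + 1 (x) e, so only the first summand of Theorem 3.1 survives. *)
rewrite (@rmorph_sumprod_vanish _ _ tensor_mul _ (fun l => cst n (v ^+ l.+1))
  (fun l => eL n (brk n ((brk n (2 * i + 1))./2 %/ 2 ^ l)))
  (fun l => eR n (brk n ((brk n (2 * i + 1))./2 %/ 2 ^ l))) (fun l => mulLR _)).
by rewrite /= mulLRC expn0 divn1 (brk_half_brk _ hi) ?ntop.
Qed.

Definition shiftm (t : B) : 'X_{1..G} := (\sum_(i < G) emono (2 ^ n.-1 + i) *+ val t i)%MM.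
Definition tdeg (t : B) : nat := (\sum_(i < G) val t i)%N.

Lemma tensor_mul_coprod (t : B) :
  tensor_mul (\prod_(i < G) coprod_gen n i ^+ val t i) =
  v%:MP ^+ tdeg t * 'X_[shiftm t + shiftm t].
Proof.
rewrite rmorph_prod /=.
under eq_bigr do rewrite rmorphXn /= tensor_mul_coprod_gen exprMn exprAC.
by rewrite big_split /= prodrXr prodrXl mprodXnE mpolyXn mulmS mulm1n.
Qed.

Lemma coprod_coef_diag (t s : B) :
  coprod_coef t s s = v ^+ tdeg t * (shiftm t == mnm_of s)%:R.
Proof.
rewrite /coprod_coef -mcoeff_tensor_mul_diag; [|exact: pchar2_K|exact: mcoeff_coprodC].
by rewrite tensor_mul_coprod -rmorphXn mcoeffCM mcoeffX eqm_double.
Qed.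

Lemma dmul_self (f : dual n) t :
  dmul f f t = v ^+ tdeg t * \sum_s (shiftm t == mnm_of s)%:R * f s ^+ 2.
Proof.
rewrite /dmul ffunE sum_sym_pchar2; [|exact: pchar2_K|]; last first.
  by move=> a b; rewrite /coprod_coef mcoeff_coprodC -!mulrA [f a * _]mulrC.
rewrite mulr_sumr; apply: eq_bigr => s _.
by rewrite coprod_coef_diag -!mulrA.
Qed.

(** * The monomials 1 and e_{2^n-1} *)

Lemma bool_lt_exp2 (b : bool) : (b < 2 ^ n)%N.
Proof. by case: b => /=; rewrite ?expn_gt0 // -{1}(expn0 2) ltn_exp2l. Qed.

Definition bvec (F : 'I_G -> bool) : expvec n := [ffun i => Ordinal (bool_lt_exp2 (F i))].

Lemma bzero_adm : admissible (bvec (fun _ => false)).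
Proof. by apply/forallP => i; rewrite ffunE /= expn_gt0. Qed.

Lemma btop_adm : admissible (bvec (pred1 top)).
Proof.
apply/forallP => i; rewrite ffunE /=.
by have [->|_] := eqVneq i top; rewrite ?kexp_top ?expn_gt0.
Qed.

Definition bzero : B := exist (@admissible n) _ bzero_adm.
Definition btop : B := exist (@admissible n) _ btop_adm.

Lemma basis_eqE (t t' : B) : (t == t') = [forall i, val t i == val t' i :> nat].
Proof.
apply/eqP/forallP => [-> //|eq_tt']; apply: val_inj; apply/ffunP => i.
by apply: val_inj; apply/eqP; apply: eq_tt'.
Qed.

Lemma eq_bzero (t : B) : (t == bzero) = [forall i, val t i == 0%N :> nat].
Proof. by rewrite basis_eqE; apply: eq_forallb => i; rewrite ffunE. Qed.

Lemma eq_btop (t : B) : (t == btop) = [forall i, val t i == (i == top) :> nat].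
Proof. by rewrite basis_eqE; apply: eq_forallb => i; rewrite ffunE. Qed.

Lemma bzero_neq_btop : bzero != btop.
Proof. by rewrite eq_btop; apply/forallP => /(_ top); rewrite ffunE eqxx. Qed.

Lemma dunitE (t : B) : dunit n t = if t == bzero then 1 else 0.
Proof. by rewrite ffunE eq_bzero. Qed.

Lemma alpha_topE (t : B) : alpha_top n t = if t == btop then 1 else 0.
Proof. by rewrite ffunE eq_btop. Qed.

Lemma tdeg_bzero : tdeg bzero = 0%N.
Proof. by rewrite /tdeg big1 // => i _; rewrite ffunE. Qed.

Lemma tdeg_btop : tdeg btop = 1%N.
Proof.
rewrite /tdeg (bigD1 top) //= ffunE /= eqxx big1 // => i ne.
by rewrite ffunE /= (negbTE ne).
Qed.

Definition special (t : B) := (t == bzero) || (t == btop).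

Lemma supported_top (t : B) : (forall i, i != top -> val t i = 0%N :> nat) -> special t.
Proof.
move=> t0; have := forallP (valP t) top; rewrite kexp_top expn1 /special eq_bzero eq_btop.
case e: (val t top : nat) => [|[|//]] _; apply/orP; [left|right]; apply/forallP => i;
  by have [->|ne] := eqVneq i top; rewrite ?e ?eqxx ?t0 ?(negbTE ne).
Qed.

Lemma mnm_ofE (t : B) j : mnm_of t j = val t j.
Proof. exact: mnmE. Qed.

Lemma mnm_of_inj : injective (@mnm_of n).
Proof.
move=> t t' e; apply/eqP; rewrite basis_eqE; apply/forallP => i.
by rewrite -!mnm_ofE e.
Qed.

Lemma shiftm_bzero : shiftm bzero = mnm_of bzero.
Proof.
apply/mnmP => j; rewrite mnm_ofE ffunE /shiftm mnm_sumE big1 // => i _.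
by rewrite ffunE mulmnE muln0.
Qed.

Lemma emono_top : emono (2 ^ n.-1 + top) = U_(top)%MM.
Proof.
have h2 := expn_pred_double; have := expn_gt0 2 n.-1; rewrite top_val => p0.
have -> : (2 ^ n.-1 + (2 ^ n.-1).-1 = (2 ^ n).-1)%N by lia.
have odd_s : odd (2 ^ n).-1 by rewrite -subn1 oddB ?expn_gt0 // oddX eqn0Ngt hn.
have hl : logn 2 (2 ^ n).-1 = 0%N by apply: logn_coprime; rewrite coprime_sym coprimen2.
have s0 : (0 < (2 ^ n).-1)%N by lia.
have := odd_part _ s0; rewrite hl expn0 mul1n => hs.
have idx_s : idx (2 ^ n).-1 = top by rewrite top_val; lia.
by rewrite /emono hl expn0 mulm1n idx_s inord_val.
Qed.

Lemma shiftm_btop : shiftm btop = mnm_of btop.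
Proof.
apply/mnmP => j; rewrite mnm_ofE ffunE /shiftm mnm_sumE (bigD1 top) //= ffunE /= eqxx.
rewrite big1 ?addn0 => [|i ne]; last by rewrite ffunE /= (negbTE ne) mulmnE muln0.
by rewrite emono_top mulmnE mnm1E muln1 eq_sym.
Qed.

Lemma wdeg_emono s : (0 < s)%N -> (s < 2 ^ n)%N -> wdeg (emono s) = s.
Proof.
move=> s0 sn; rewrite /emono /wdeg (bigD1 (inord (idx s))) //= big1 => [|j ne]; last first.
  by rewrite mulmnE mnm1E eq_sym (negbTE ne).
by rewrite mulmnE mnm1E eqxx inordK ?(idx_lt _ s0 sn) // addn0 mul1n -(odd_part _ s0).
Qed.

Lemma wdeg_mnm_of (t : B) : wdeg (mnm_of t) = (\sum_i val t i * (2 * i + 1))%N.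
Proof. by apply: eq_bigr => i _; rewrite mnm_ofE. Qed.

Lemma wdeg_shiftm (t : B) : wdeg (shiftm t) = (\sum_i val t i * (2 ^ n.-1 + i))%N.
Proof.
rewrite wdeg_sum; apply: eq_bigr => i _; have lt_i : (i < 2 ^ n.-1)%N by rewrite -Ngen_eq ltn_ord.
by rewrite mulnC wdeg_emono //; have := expn_gt0 2 n.-1; have := expn_pred_double; lia.
Qed.

Lemma wdeg_lt_shiftm (t : B) : ~~ special t -> (wdeg (mnm_of t) < wdeg (shiftm t))%N.
Proof.
move=> nsp; have [i ne ti] : exists2 i, i != top & (val t i : nat) != 0%N.
  case: (boolP [exists i, (i != top) && (val t i != 0%N :> nat)]).
    by case/existsP => i /andP[ne ti]; exists i.
  move/existsPn => H; case/negP: nsp; apply: supported_top => i ne.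
  by apply/eqP; have := H i; rewrite ne negbK.
have lt_ord (j : 'I_G) : (j < 2 ^ n.-1)%N by rewrite -Ngen_eq ltn_ord.
rewrite wdeg_shiftm wdeg_mnm_of (bigD1 i) //= [X in (_ < X)%N](bigD1 i) //= -addSn.
apply: leq_add; first by rewrite ltn_pmul2l ?lt0n //; have := ltn_top _ ne; rewrite top_val; lia.
by apply: leq_sum => j _; apply: leq_mul => //; have := lt_ord j; lia.
Qed.

Lemma shiftm_coord_eq0 (t : B) (i : 'I_G) :
  shiftm t (inord (idx (2 ^ n.-1 + i))) = 0%N -> val t i = 0%N :> nat.
Proof.
rewrite /shiftm mnm_sumE (bigD1 i) //= => /eqP; rewrite addn_eq0 => /andP[+ _].
by rewrite /emono !mulmnE mnm1E eqxx mul1n muln_eq0 expn_eq0 => /eqP.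
Qed.

Lemma idx_neq_top (i : 'I_G) : i != top -> (inord (idx (2 ^ n.-1 + i)) : 'I_G) != top.
Proof.
move=> ne; have := ltn_top _ ne; rewrite top_val => lt_top.
have lt_i : (i < 2 ^ n.-1)%N by rewrite -Ngen_eq ltn_ord.
have s0 : (0 < 2 ^ n.-1 + i)%N by rewrite ltn_addr ?expn_gt0.
have s_lt : (2 ^ n.-1 + i < 2 ^ n)%N by rewrite expn_pred_double ltn_add2l.
have : (2 * idx (2 ^ n.-1 + i) + 1 <= 2 ^ n.-1 + i)%N.
  by rewrite {2}(odd_part _ s0) leq_pmull ?expn_gt0.
rewrite -val_eqE /= inordK ?(idx_lt _ s0 s_lt) //; lia.
Qed.

Lemma shiftm_special (t s : B) : special s -> (shiftm t == mnm_of s) = (t == s).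
Proof.
case/orP => /eqP ->; apply/eqP/eqP => [e|->]; rewrite ?shiftm_bzero ?shiftm_btop //.
  apply/eqP; rewrite eq_bzero; apply/forallP => i; apply/eqP/shiftm_coord_eq0.
  by rewrite e mnm_ofE ffunE.
have : special t.
  apply: supported_top => i ne; apply: shiftm_coord_eq0.
  by rewrite e mnm_ofE ffunE /= (negbTE (idx_neq_top _ ne)).
case/orP => /eqP et //; move: e; rewrite et shiftm_bzero => /mnm_of_inj e.
by move: bzero_neq_btop; rewrite e eqxx.
Qed.

(** * Idempotents of the dual algebra *)

Lemma dmul_self_special (f : dual n) (t : B) :
  (forall s, ~~ special s -> f s = 0) -> dmul f f t = v ^+ tdeg t * f t ^+ 2.
Proof.
move=> f0; rewrite dmul_self; congr (_ * _).
rewrite (eq_bigr (fun s => (t == s)%:R * f s ^+ 2)) => [|s _]; last first.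
  by case: (boolP (special s)) => [/shiftm_special -> // | /f0 ->]; rewrite expr0n !mulr0.
rewrite (bigD1 t) //= eqxx mul1r big1 ?addr0 // => s ne.
by rewrite eq_sym (negbTE ne) mul0r.
Qed.

Lemma idem_special (f : dual n) : dual_idem f -> forall t, ~~ special t -> f t = 0.
Proof.
move=> idf t0 nsp0; apply/eqP; apply: contraT => ft0.
pose P t := ~~ special t && (f t != 0).
have [t /andP[nsp ft] tmax] := @arg_maxnP _ t0 P (fun t => wdeg (mnm_of t)) (introT andP (conj nsp0 ft0)).
have [s es fs] : exists2 s, shiftm t = mnm_of s & f s != 0.
  case: (pickP (fun s => (shiftm t == mnm_of s) && (f s != 0))) => [s /andP[/eqP e fs]|none].
    by exists s.
  case/negP: ft; rewrite -idf dmul_self big1 ?mulr0 // => s _.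
  by case/nandP: (negbT (none s)) => [/negbTE -> | /negPn/eqP ->]; rewrite ?mul0r ?expr0n ?mulr0.
have nsps : ~~ special s.
  apply: contra nsp => sps; suff /eqP -> : t == s by [].
  by rewrite -(shiftm_special t _ sps) es.
have := tmax s; rewrite /P nsps fs -es => /(_ isT).
by rewrite /= leqNgt (wdeg_lt_shiftm _ nsp).
Qed.

Definition dual_form (a b : K) : dual n :=
  [ffun t => if t == bzero then a else if t == btop then b else 0].

Lemma dual_form_bzero a b : dual_form a b bzero = a.
Proof. by rewrite ffunE eqxx. Qed.

Lemma dual_form_btop a b : dual_form a b btop = b.
Proof. by rewrite ffunE eq_sym (negbTE bzero_neq_btop) eqxx. Qed.

Lemma dual_form_special a b (t : B) : ~~ special t -> dual_form a b t = 0.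
Proof. by rewrite ffunE => /norP[/negbTE -> /negbTE ->]. Qed.

Lemma dual_formE (f : dual n) :
  (forall t, ~~ special t -> f t = 0) -> f = dual_form (f bzero) (f btop).
Proof.
move=> f0; apply/ffunP => t; case: (boolP (special t)) => [|nsp].
  by case/orP => /eqP ->; rewrite ?dual_form_bzero ?dual_form_btop.
by rewrite (f0 t nsp) (dual_form_special _ _ _ nsp).
Qed.

Lemma dual_form_inj a b a' b' : dual_form a b = dual_form a' b' -> a = a' /\ b = b'.
Proof.
move=> e; split; first by rewrite -(dual_form_bzero a b) e dual_form_bzero.
by rewrite -(dual_form_btop a b) e dual_form_btop.
Qed.

Lemma dmul_form a b : dmul (dual_form a b) (dual_form a b) = dual_form (a ^+ 2) (v * b ^+ 2).
Proof.
set g := dual_form a b; have g0 : forall t, ~~ special t -> g t = 0 := dual_form_special a b.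
rewrite [LHS](dual_formE (dmul g g)) => [|t nsp]; last first.
  by rewrite dmul_self_special // g0 // expr0n mulr0.
by rewrite !dmul_self_special // tdeg_bzero tdeg_btop dual_form_bzero dual_form_btop expr0 expr1 mul1r.
Qed.

Lemma dual_idemE (f : dual n) : dual_idem f -> f = dual_form (f bzero) (f btop).
Proof. by move=> idf; apply: dual_formE; apply: idem_special. Qed.

Lemma dual_idem_form a b : dual_idem (dual_form a b) <-> a ^+ 2 = a /\ v * b ^+ 2 = b.
Proof.
rewrite /dual_idem dmul_form; split => [/dual_form_inj //|[-> ->] //].
Qed.

Lemma dual_form0 : dual_form 0 0 = 0.
Proof. by apply/ffunP => t; rewrite !ffunE; case: ifP => //; case: ifP. Qed.

Lemma dunit_form : dunit n = dual_form 1 0.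
Proof. by apply/ffunP => t; rewrite dunitE ffunE; case: ifP => // _; case: ifP. Qed.

Lemma vinv_alpha_form : vinv_alpha n = dual_form 0 v^-1.
Proof.
apply/ffunP => t; rewrite ffunE alpha_topE ffunE.
have [->|_] := eqVneq t bzero; first by rewrite (negbTE bzero_neq_btop) mulr0.
by case: ifP; rewrite ?mulr1 ?mulr0.
Qed.

Lemma dunit_sub_vinv_alpha : dunit n - vinv_alpha n = dual_form 1 v^-1.
Proof.
apply/ffunP => t; rewrite ffunE dunit_form vinv_alpha_form !ffunE (oppr_pchar2 pchar2_K).
by case: ifP => _; [rewrite addr0 | case: ifP => _; rewrite ?add0r ?addr0].
Qed.

End Coproduct.

Theorem proposition5p6 (n : nat) (hn : (1 <= n)%N) (f : dual n) :
  dual_elt f ->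
  (dual_idem f /\ f <> 0 /\ f <> dunit n) <->
  (f = vinv_alpha n \/ f = dunit n - vinv_alpha n).
Proof.
(* The coefficients of f need not be assumed to lie in F_2[v, v^-1]. *)
move=> _.
rewrite (dunit_sub_vinv_alpha hn) (vinv_alpha_form hn) (dunit_form hn) -(dual_form0 hn).
split => [[idf [f0 f1]] | fE].
  have [a [b ef]] : exists a b, f = dual_form hn a b.
    by exists (f (bzero hn)), (f (btop hn)); apply: dual_idemE.
  move: idf f0 f1; rewrite ef => /(dual_idem_form hn) [/sqrf_idem ha hb] f0 f1.
  have : (v * b) ^+ 2 = v * b by rewrite exprMn expr2 -mulrA hb.
  case/sqrf_idem => [/eqP | vb1].
    rewrite mulf_eq0 (negbTE v_neq0) /= => /eqP b0.
    by case: ha => a01; [case: f0 | case: f1]; rewrite a01 b0.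
  have -> : b = v^-1 by rewrite -(mulKf v_neq0 b) vb1 mulr1.
  by case: ha => ->; [left | right].
have nz : v^-1 != 0 by rewrite invr_eq0 v_neq0.
have idem a : a ^+ 2 = a -> dual_idem (dual_form hn a v^-1).
  by move=> ha; apply/dual_idem_form; split => //; rewrite expr2 mulrA mulfV ?v_neq0 ?mul1r.
by case: fE => ->; (split; [apply: idem; rewrite ?expr0n ?expr1n
                          | split => /dual_form_inj[_ /eqP]; rewrite (negbTE nz)]).
Qed.
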